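(* Consider a hyperfractal with $n$ nodes and $d_F>2$. Let $\epsilon>0$ and $H(n)=\left\lceil \frac{\log(n^{1-\epsilon}p/2)}{\log(2/q)}\right\rceil$, and let $n_c$ denote the number of mobile nodes on a street of level $H(n)$. Then the probability that this street is empty, i.e. $\mathbb{P}(n_c=0)$, is smaller than $e^{-(q/2)n^{\epsilon}}$.
   Context: Hyperfractal model: the map is the unit square $[0,1]^2$. For $l\ge 0$ let $\mathcal{X}_l=\{(b2^{-(l+1)},y): b=1,3,\dots,2^{l+1}-1,\ y\in[0,1]\}\cup\{(x,b2^{-(l+1)}): b=1,3,\dots,2^{l+1}-1,\ x\in[0,1]\}$; each such segment is a street of level $l$. Fix $p\in(0,1)$, $q=1-p$. The $n$ mobile nodes form a Poisson point process on $\bigcup_l\mathcal{X}_l$ with total mean $n$ and one-dimensional intensity $\lambda_l=n(p/2)(q/2)^l$ on $\mathcal{X}_l$. The fractal dimension is $d_F=\log(4/q)/\log 2$. *)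

From HB Require Import structures.
From mathcomp Require Import all_boot all_order all_algebra.
From mathcomp Require Import all_classical all_reals all_analysis.
Set Implicit Arguments. Unset Strict Implicit. Unset Printing Implicit Defensive.
Import Order.TTheory GRing.Theory Num.Theory.
Import numFieldNormedType.Exports.
Local Open Scope classical_set_scope.
Local Open Scope ring_scope.

Section Hyperfractal.
Context {R : realType}.

(* A street: level l, odd index b with b < 2^(l+1), and orientation.
   vertical = true  : the segment {(b 2^-(l+1), y) : y in [0,1]}
   vertical = false : the segment {(x, b 2^-(l+1)) : x in [0,1]} *)
Record street := Street { st_level : nat; st_index : nat; st_vertical : bool }.

Definition street_valid (s : street) : bool :=
  odd (st_index s) && (st_index s < 2 ^ (st_level s).+1)%N.

Definition street_coord (l b : nat) : R := b%:R / (2 ^+ l.+1).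

Definition street_set (s : street) : set (R * R) :=
  if st_vertical s then
    [set z | z.1 = street_coord (st_level s) (st_index s) /\ 0 <= z.2 <= 1]
  else
    [set z | z.2 = street_coord (st_level s) (st_index s) /\ 0 <= z.1 <= 1].

(* one-dimensional intensity on X_l : lambda_l = n (p/2) (q/2)^l, q = 1 - p *)
Definition hf_lambda (n p : R) (l : nat) : R := n * (p / 2) * ((1 - p) / 2) ^+ l.

Definition hf_dim (p : R) : R := ln (4 / (1 - p)) / ln 2.

Definition vert_len (A : set (R * R)) (l b : nat) : \bar R :=
  lebesgue_measure [set y : R | 0 <= y <= 1 /\ A (street_coord l b, y)].
Definition horiz_len (A : set (R * R)) (l b : nat) : \bar R :=
  lebesgue_measure [set x : R | 0 <= x <= 1 /\ A (x, street_coord l b)].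

Definition hf_intensity (n p : R) (A : set (R * R)) : \bar R :=
  (\sum_(0 <= l <oo)
     ((hf_lambda n p l)%:E *
       \sum_(b < 2 ^ l.+1 | odd b) (vert_len A l b + horiz_len A l b)))%E.

Definition pois_pmf (r : R) (k : nat) : R := expR (- r) * r ^+ k / k`!%:R.

Definition ppp_count {T : Type} (X : T -> seq (R * R)) (A : set (R * R)) (w : T)
  : nat := count (fun z => `[< A z >]) (X w).

Definition is_hyperfractal_ppp {d : measure_display} {T : measurableType d}
  (P : probability T R) (n p : R) (X : T -> seq (R * R)) : Prop :=
  [/\ (forall A, measurable A -> forall k : nat,
          measurable [set w | ppp_count X A w = k]),
      (forall A, measurable A -> forall k : nat,
          P [set w | ppp_count X A w = k] = (pois_pmf (fine (hf_intensity n p A)) k)%:E) &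
      (forall (m : nat) (A : 'I_m -> set (R * R)) (k : 'I_m -> nat),
          (forall i, measurable (A i)) ->
          (forall i j, i != j -> A i `&` A j = set0) ->
          P (\bigcap_(i in [set: 'I_m]) [set w | ppp_count X (A i) w = k i])
          = (\prod_(i < m) P [set w | ppp_count X (A i) w = k i])%E)].

End Hyperfractal.

(* The street of level H is a single unit segment, and no other street shares a
   set of positive length with it, so its intensity is exactly lambda_H and
   P(n_c = 0) = exp(-lambda_H).  Since H < x + 1 for
   x = log(n^(1-eps) p/2) / log(2/q), we get (2/q)^H < (2/q) n^(1-eps) p/2,
   which rearranges to lambda_H = n (p/2) (q/2)^H > (q/2) n^eps. *)

From HB Require Import structures.
From mathcomp Require Import all_boot all_order all_algebra.
From mathcomp Require Import all_classical all_reals all_analysis.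
From mathcomp Require Import ring lra.
Import Order.TTheory GRing.Theory Num.Theory.
Local Open Scope classical_set_scope.
Local Open Scope ring_scope.

Lemma odd_mul_pow2_inj {b b' k k' : nat} : odd b -> odd b' ->
  (b * 2 ^ k = b' * 2 ^ k')%N -> k = k' /\ b = b'.
Proof.
move=> ob ob' e.
have ek : k = k'.
  have logn2 c m : odd c -> logn 2 (c * 2 ^ m) = m.
    by move=> oc; rewrite logn_Gauss ?coprime2n // pfactorK.
  by rewrite -(logn2 b k ob) e logn2.
split=> //; apply/eqP; rewrite -(eqn_pmul2r (expn_gt0 2 k)).
by rewrite {2}ek e.
Qed.

Section StreetGeometry.
Variable R : realType.

Lemma street_coord_inj {l b l' b' : nat} : odd b -> odd b' ->
  street_coord l b = street_coord l' b' :> R -> l = l' /\ b = b'.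
Proof.
move=> ob ob' /eqP; rewrite /street_coord.
rewrite eqr_div ?expf_neq0 ?pnatr_eq0 // -!natrX -!natrM eqr_nat => /eqP e.
by have [/succn_inj -> ->] := odd_mul_pow2_inj ob ob' e.
Qed.

Lemma street_coord_itv {l b : nat} : (b < 2 ^ l.+1)%N ->
  0 <= (street_coord l b : R) <= 1.
Proof.
move=> hb; rewrite /street_coord divr_ge0 ?exprn_ge0 ?ler0n //=.
by rewrite ler_pdivrMr ?exprn_gt0 // mul1r -natrX ler_nat ltnW.
Qed.

Lemma lebesgue_measure_unit_itv :
  lebesgue_measure [set y : R | 0 <= y <= 1] = 1%E.
Proof.
have -> : [set y : R | 0 <= y <= 1] = [set` `[0, 1]].
  by apply/seteqP; split => y /=; rewrite in_itv.
by rewrite lebesgue_measure_itv /= lte_fin ltr01 /= oppr0 adde0.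
Qed.

Lemma street_set_measurable (s : street) : measurable (street_set (R:=R) s).
Proof.
case: s => l b [] /=; rewrite /street_set /=.
- have -> : [set z : R * R | z.1 = street_coord l b /\ 0 <= z.2 <= 1]
      = [set street_coord l b] `*` [set` `[0, 1]].
    by apply/seteqP; split => -[x y] /=; rewrite in_itv.
  exact: measurableX (measurable_set1 _) (measurable_itv _).
- have -> : [set z : R * R | z.2 = street_coord l b /\ 0 <= z.1 <= 1]
      = [set` `[0, 1]] `*` [set street_coord l b].
    by apply/seteqP; split => -[x y] /=; rewrite in_itv /= => -[].
  exact: measurableX (measurable_itv _) (measurable_set1 _).
Qed.

(* Distinct parallel streets are disjoint by street_coord_inj, and
   perpendicular streets meet in a single point, of length zero. *)
Lemma len_street_set (L B l b : nat) (v : bool) :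
  odd B -> (B < 2 ^ L.+1)%N -> odd b -> (b < 2 ^ l.+1)%N ->
  (vert_len (street_set (Street L B v)) l b
   + horiz_len (street_set (Street L B v)) l b
   = if (l == L) && (b == B) then 1 else 0 :> \bar R)%E.
Proof.
move=> oB hB ob hb.
have cB := street_coord_itv hB; have cb := street_coord_itv hb.
have crossing : [set x : R | 0 <= x <= 1 /\
    x = street_coord L B /\ 0 <= (street_coord l b : R) <= 1]
    = [set street_coord L B].
  by apply/seteqP; split => x /=; [case=> _ [] | move=> ->].
have parallel : [set y : R | 0 <= y <= 1 /\
    street_coord l b = street_coord L B :> R /\ 0 <= y <= 1]
    = if (l == L) && (b == B) then [set y | 0 <= y <= 1] else set0.
  case: ifP => [/andP[/eqP -> /eqP ->]|neq].
    by apply/seteqP; split => y /=; [case | move=> h; split].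
  apply/seteqP; split => y //= [_ [e _]].
  by have [eL eB] := street_coord_inj ob oB e; rewrite eL eB !eqxx in neq.
rewrite /vert_len /horiz_len /street_set; case: v => /=;
  rewrite crossing parallel lebesgue_measure_set1 ?adde0 ?add0e;
  by case: ifP; rewrite ?lebesgue_measure_unit_itv ?measure0.
Qed.

End StreetGeometry.

Lemma nneseries_single {R : realType} (f : nat -> \bar R) (L : nat) :
  (0 <= f L)%E -> (forall l, l != L -> f l = 0%E) ->
  (\sum_(0 <= l <oo) f l = f L)%E.
Proof.
move=> fL0 f0.
have f_ge0 l : (0 <= f l)%E by have [->|/f0 ->] := eqVneq l L.
rewrite (nneseries_split 0 L.+1) // eseries0 ?adde0; last first.
  by move=> l hl _; rewrite f0 // gtn_eqF.
by rewrite big_nat_recr //= big1_seq ?add0e // => l /andP[_];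
  rewrite mem_index_iota => /andP[_ /ltn_eqF/negbT/f0].
Qed.

Lemma hf_lambda_ge0 (R : realType) (n p : R) (l : nat) :
  0 <= n -> 0 <= p <= 1 -> 0 <= hf_lambda n p l.
Proof.
move=> n0 /andP[p0 p1].
by rewrite /hf_lambda !mulr_ge0 ?exprn_ge0 ?divr_ge0 // subr_ge0.
Qed.

Lemma hf_intensity_street (R : realType) (n p : R) (L B : nat) (v : bool) :
  0 <= n -> 0 <= p <= 1 -> odd B -> (B < 2 ^ L.+1)%N ->
  hf_intensity n p (street_set (Street L B v)) = (hf_lambda n p L)%:E.
Proof.
move=> n0 p01 oB hB.
have level_len l : (\sum_(b < 2 ^ l.+1 | odd b)
    (vert_len (street_set (Street L B v)) l b
     + horiz_len (street_set (Street L B v)) l b))%E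
    = (if l == L then 1 else 0 : \bar R)%E.
  under eq_bigr => b ob do rewrite len_street_set //.
  have [->|neqL] := eqVneq l L; last by rewrite big1 // => b _; rewrite andFb.
  rewrite (bigD1 (Ordinal hB)) //= !eqxx big1 ?adde0 // => b /andP[_ neqB].
  by case: eqP => // eB; move: neqB; rewrite -val_eqE /= eB eqxx.
rewrite /hf_intensity; under eq_eseriesr => l _ do rewrite level_len.
rewrite (nneseries_single _ L) ?eqxx ?mule1 //.
- by rewrite lee_fin hf_lambda_ge0.
- by move=> l /negPf ->; rewrite mule0.
Qed.

Lemma pois_pmf0 (R : realType) (r : R) : pois_pmf r 0 = expR (- r).
Proof. by rewrite /pois_pmf expr0 mulr1 divr1. Qed.

Lemma expr_ceil_log_lt {R : realType} {a m : R} {L : nat} :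
  1 < a -> 0 < m -> L%:Z = Num.ceil (ln m / ln a) -> a ^+ L < m * a.
Proof.
move=> a1 m0 hL.
have a0 : 0 < a := lt_trans ltr01 a1.
have lna0 : 0 < ln a by exact: ln_gt0.
have : (L%:R - 1) * ln a < ln m.
  by rewrite -ltr_pdivlMr //; have := ceilB1_lt (ln m / ln a); rewrite -hL intrB.
have -> : a ^+ L = expR (L%:R * ln a) by rewrite expRM_natl lnK ?posrE.
have -> : m * a = expR (ln m + ln a) by rewrite expRD !lnK ?posrE.
rewrite ltr_expR; lra.
Qed.

Lemma hf_lambda_gt (R : realType) (n p eps : R) (L : nat) :
  0 < p < 1 -> 0 < n ->
  L%:Z = Num.ceil (ln (n `^ (1 - eps) * p / 2) / ln (2 / (1 - p))) ->
  (1 - p) / 2 * n `^ eps < hf_lambda n p L.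
Proof.
move=> /andP[p0 p1] n0 hL.
set q := 1 - p; set a := 2 / q; set m := n `^ (1 - eps) * p / 2.
have q0 : 0 < q by rewrite subr_gt0.
have a1 : 1 < a by rewrite ltr_pdivlMr // mul1r /q; lra.
have a0 : 0 < a := lt_trans ltr01 a1.
have m0 : 0 < m by rewrite !mulr_gt0 ?powR_gt0.
have aL := expr_ceil_log_lt a1 m0 hL.
have qa : q / 2 = a^-1 by rewrite invf_div.
have n_split : n `^ eps * n `^ (1 - eps) = n.
  by rewrite -powRD ?subrKC ?powRr1 ?ltW //; apply/implyP => _; rewrite gt_eqF.
rewrite /hf_lambda -/q qa exprVn ltr_pdivlMr ?exprn_gt0 //.
have -> : n * (p / 2) = a^-1 * n `^ eps * (m * a).
  by rewrite /m -[X in X * _ = _]n_split; field; rewrite gt_eqF.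
by rewrite ltr_pM2l // mulr_gt0 ?powR_gt0 ?invr_gt0.
Qed.

Theorem lemma5 (R : realType) (d : measure_display) (T : measurableType d)
  (P : probability T R) (n : nat) (p eps : R) (X : T -> seq (R * R)) :
  0 < p < 1 -> (0 < n)%N ->
  is_hyperfractal_ppp P n%:R p X ->
  2 < hf_dim p ->
  0 < eps ->
  let H : int := Num.ceil (ln (n%:R `^ (1 - eps) * p / 2) / ln (2 / (1 - p))) in
  0 <= H ->
  forall s : street, street_valid s -> (st_level s)%:Z = H ->
  (P [set w | ppp_count X (street_set s) w = 0%N]
    < (expR (- ((1 - p) / 2 * n%:R `^ eps)))%:E)%E.
Proof.
(* The bound holds without d_F > 2, eps > 0 or H >= 0. *)
move=> p01 n0 [_ pois _] _ _ H _ [L B v] /andP[/= oB hB] /= hL.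
have p_in01 : 0 <= p <= 1 by case/andP: p01 => /ltW -> /ltW ->.
rewrite pois; last exact: street_set_measurable.
rewrite hf_intensity_street ?ler0n //= pois_pmf0 lte_fin ltr_expR ltrN2.
by apply: hf_lambda_gt; rewrite ?ltr0n.
Qed.
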